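(* In the setting of the context, Axiom (P3) holds for $\{d_a\mid a\in C\}$ with any $\theta\ge4\delta$: for any $b,c\in C$ the set $\{a\in C\setminus\{b,c\}: d_a(b,c)>\theta\}$ is finite.
   Context: $X$ is a $\delta$-hyperbolic geodesic metric space ($\delta>0$, every geodesic triangle $\delta$-thin). $G$ acts on $X$ by isometries and $\mathcal{C}=(C,\{G_c\})$ is a $\rho$-separated fairly rotating family with $\rho\ge20\delta$ (i.e. $C\subseteq X$ is $G$-invariant, $G_c$ fixes $c$, $G_{gc}=gG_cg^{-1}$, distinct points of $C$ are at distance $\ge\rho$, and for $c\in C$, $g\in G_c\setminus\{1\}$, $x\in C\setminus\{c\}$ some geodesic from $x$ to $gx$ meets the closed $1$-ball about $c$). Fix $2+2\delta\le R\le\frac\rho2-3\delta$; $B_r(p)$ denotes the open ball. For $p\in C$, $S_p=\{x:d(x,p)=R\}$ with metric $d_{S_p}(x,y)=$ infimum of lengths of paths from $x$ to $y$ in $X\setminus B_R(p)$ (possibly $\infty$). For $x\in C\setminus\{p\}$, $\pi_p(x)\subseteq S_p$ is the set of points where geodesics $[p,x]$ meet $S_p$, and $d_p(x,y)=\operatorname{diam}_{S_p}(\pi_p(x)\cup\pi_p(y))$. *)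

From Stdlib Require Import Reals List.
From Coquelicot Require Import Coquelicot.
Open Scope R_scope.

Section Defs.
Variable X : Type.
Variable d : X -> X -> R.

Definition is_metric : Prop :=
  (forall x y, 0 <= d x y) /\
  (forall x y, d x y = 0 <-> x = y) /\
  (forall x y, d x y = d y x) /\
  (forall x y z, d x z <= d x y + d y z).

Definition geodesic (gam : R -> X) (x y : X) : Prop :=
  gam 0 = x /\ gam (d x y) = y /\
  (forall s t, 0 <= s <= d x y -> 0 <= t <= d x y ->
     d (gam s) (gam t) = Rabs (s - t)).

Definition on_geod (gam : R -> X) (x y : X) (u : X) : Prop :=
  exists t, 0 <= t <= d x y /\ gam t = u.

Definition geodesic_space : Prop :=
  forall x y, exists gam, geodesic gam x y.

Definition thin_triangles (delta : R) : Prop :=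
  forall (x y z : X) (g1 g2 g3 : R -> X),
    geodesic g1 x y -> geodesic g2 y z -> geodesic g3 z x ->
    (forall u, on_geod g1 x y u -> exists w,
        (on_geod g2 y z w \/ on_geod g3 z x w) /\ d u w <= delta) /\
    (forall u, on_geod g2 y z u -> exists w,
        (on_geod g3 z x w \/ on_geod g1 x y w) /\ d u w <= delta) /\
    (forall u, on_geod g3 z x u -> exists w,
        (on_geod g1 x y w \/ on_geod g2 y z w) /\ d u w <= delta).

Definition path_cont (gam : R -> X) : Prop :=
  forall t, 0 <= t <= 1 -> forall eps, 0 < eps -> exists eta, 0 < eta /\
    forall s, 0 <= s <= 1 -> Rabs (s - t) < eta -> d (gam s) (gam t) < eps.

Fixpoint poly_sum (gam : R -> X) (t0 : R) (ts : list R) : R :=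
  match ts with
  | nil => 0
  | t1 :: ts' => d (gam t0) (gam t1) + poly_sum gam t1 ts'
  end.

Fixpoint sorted_le (t0 : R) (ts : list R) : Prop :=
  match ts with
  | nil => True
  | t1 :: ts' => t0 <= t1 /\ sorted_le t1 ts'
  end.

(* partitions 0 = t_0 <= t_1 <= ... <= t_n = 1, given as the tail t_1..t_n *)
Definition partition01 (ts : list R) : Prop :=
  sorted_le 0 ts /\ last ts 0 = 1.

Definition path_length (gam : R -> X) : Rbar :=
  Rbar_lub (fun l => exists ts, partition01 ts /\ l = Finite (poly_sum gam 0 ts)).

Definition in_open_ball (p : X) (r : R) (x : X) : Prop := d x p < r.

Definition in_sphere (p : X) (r : R) (x : X) : Prop := d x p = r.

(* d_{S_p}(x,y): infimum of lengths of paths from x to y in X \ B_r(p)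
   (= +oo when there is no such path). *)
Definition dS (p : X) (r : R) (x y : X) : Rbar :=
  Rbar_glb (fun l => exists gam, path_cont gam /\ gam 0 = x /\ gam 1 = y /\
     (forall t, 0 <= t <= 1 -> ~ in_open_ball p r (gam t)) /\
     l = path_length gam).

Definition in_proj (p : X) (r : R) (x : X) (u : X) : Prop :=
  exists gam, geodesic gam p x /\ on_geod gam p x u /\ in_sphere p r u.

Definition diamS (p : X) (r : R) (A : X -> Prop) : Rbar :=
  Rbar_lub (fun l => exists u v, A u /\ A v /\ l = dS p r u v).

Definition dproj (p : X) (r : R) (x y : X) : Rbar :=
  diamS p r (fun u => in_proj p r x u \/ in_proj p r y u).

Variable G : Type.
Variable mul : G -> G -> G.
Variable inv : G -> G.
Variable one : G.
Variable act : G -> X -> X.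

Definition is_group : Prop :=
  (forall a b c, mul (mul a b) c = mul a (mul b c)) /\
  (forall a, mul one a = a) /\ (forall a, mul a one = a) /\
  (forall a, mul (inv a) a = one) /\ (forall a, mul a (inv a) = one).

Definition isometric_action : Prop :=
  (forall x, act one x = x) /\
  (forall g h x, act (mul g h) x = act g (act h x)) /\
  (forall g x y, d (act g x) (act g y) = d x y).

Definition is_subgroup (H : G -> Prop) : Prop :=
  H one /\ (forall a b, H a -> H b -> H (mul a b)) /\ (forall a, H a -> H (inv a)).

Definition fairly_rotating_family (C : X -> Prop) (Gs : X -> G -> Prop) (rho : R) : Prop :=
  (forall g c, C c -> C (act g c)) /\
  (forall c, C c -> is_subgroup (Gs c)) /\
  (forall c g, C c -> Gs c g -> act g c = c) /\
  (forall c g h, C c ->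
     (Gs (act g c) h <-> exists k, Gs c k /\ h = mul (mul g k) (inv g))) /\
  (forall c c', C c -> C c' -> c <> c' -> rho <= d c c') /\
  (forall c g x, C c -> Gs c g -> g <> one -> C x -> x <> c ->
     exists gam, geodesic gam x (act g x) /\
       exists u, on_geod gam x (act g x) u /\ d u c <= 1).

End Defs.

Definition finite_set {T : Type} (P : T -> Prop) : Prop :=
  exists l : list T, forall a, P a -> In a l.

From Stdlib Require Import Reals List Lra Classical.
From Coquelicot Require Import Coquelicot.
Open Scope R_scope.

(* Fix b, c in C and a geodesic [b,c].  If a in C \ {b,c} is farther than
   R + 2δ from every point of [b,c], then d_a(b,c) <= 4δ <= θ: for y, y' in
   {b,c}, thinness of the triangle (a, y, y') puts the point of [a,y] at
   distance R + δ from a within δ of a point w of [a,y'] with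
   R <= d(a,w) <= R + 2δ, and the path going out along [a,y], across to w
   and back down [a,y'] avoids B_R(a), has length <= 4δ and joins the two
   projections.  Hence every a with d_a(b,c) > θ is within R + 2δ of some
   point [b,c](t); by ρ-separation two distinct such a have parameters t
   more than δ apart, so slicing [0, d(b,c)] into intervals of length δ
   shows that there are finitely many of them. *)

Ltac solve_abs := unfold Rabs in *; repeat match goal with
  | |- context [Rcase_abs ?x] => destruct (Rcase_abs x)
  | H : context [Rcase_abs ?x] |- _ => destruct (Rcase_abs x) end; lra.

Lemma Rbar_lub_le (E : Rbar -> Prop) (b : Rbar) :
  (forall x, E x -> Rbar_le x b) -> Rbar_le (Rbar_lub E) b.
Proof. intros H. exact (proj2 (proj2_sig (Rbar_ex_lub E)) b H). Qed.

Lemma Rbar_glb_le (E : Rbar -> Prop) (x : Rbar) : E x -> Rbar_le (Rbar_glb E) x.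
Proof. intros H. exact (proj1 (proj2_sig (Rbar_ex_glb E)) x H). Qed.

Section Geodesics.
Variable X : Type.
Variable d : X -> X -> R.
Hypothesis Hm : is_metric X d.

Lemma geodesic_dist_start g x y t :
  geodesic X d g x y -> 0 <= t <= d x y -> d x (g t) = t /\ d (g t) x = t.
Proof.
  destruct Hm as [Hpos [_ [Hsym _]]]. intros [H0 [_ Hiso]] Ht.
  assert (E : d (g 0) (g t) = t).
  { rewrite Hiso by (pose proof (Hpos x y); lra). solve_abs. }
  rewrite H0 in E. split; [exact E|]. rewrite Hsym. exact E.
Qed.

Lemma geodesic_rev g x y :
  geodesic X d g x y -> geodesic X d (fun t => g (d x y - t)) y x.
Proof.
  destruct Hm as [_ [_ [Hsym _]]]. intros [H0 [H1 Hiso]].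
  split; [|split].
  - rewrite Rminus_0_r. exact H1.
  - rewrite (Hsym y x), Rminus_diag. exact H0.
  - intros s t Hs Ht. rewrite (Hsym y x) in Hs, Ht. rewrite Hiso by lra. solve_abs.
Qed.

Lemma geodesic_const x : geodesic X d (fun _ => x) x x.
Proof.
  destruct Hm as [_ [Hzero _]]. assert (E : d x x = 0) by (apply Hzero; reflexivity).
  split; [reflexivity|split; [reflexivity|]].
  intros s t Hs Ht. rewrite E in *. solve_abs.
Qed.

Lemma in_proj_point a r y u :
  in_proj X d a r y u -> exists g, geodesic X d g a y /\ g r = u /\ 0 <= r <= d a y.
Proof.
  intros [g [Hg [[t [Ht Hu]] Hs]]]. unfold in_sphere in Hs.
  assert (t = r).
  { rewrite <- Hs, <- Hu. symmetry. apply (geodesic_dist_start g a y t Hg Ht). }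
  subst t. exists g. auto.
Qed.

End Geodesics.

Section LipschitzPaths.
Context {X : Type}.
Variable d : X -> X -> R.

Definition Lip1 (f : R -> X) (T : R) : Prop :=
  forall s t, 0 <= s <= T -> 0 <= t <= T -> d (f s) (f t) <= Rabs (s - t).

Definition concat (f g : R -> X) (a : R) : R -> X :=
  fun t => if Rle_dec t a then f t else g (t - a).

Lemma concat_left f g a t : t <= a -> concat f g a t = f t.
Proof. intros H. unfold concat. destruct (Rle_dec t a); [reflexivity|lra]. Qed.

Lemma concat_right f g a t : f a = g 0 -> a <= t -> concat f g a t = g (t - a).
Proof.
  intros E H. unfold concat. destruct (Rle_dec t a); [|reflexivity].
  assert (t = a) by lra. subst. rewrite Rminus_diag. exact E.
Qed.

Lemma concat_all (P : X -> Prop) f g a b :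
  (forall t, 0 <= t <= a -> P (f t)) -> (forall t, 0 <= t <= b -> P (g t)) ->
  forall t, 0 <= t <= a + b -> P (concat f g a t).
Proof.
  intros Hf Hg t Ht. unfold concat. destruct (Rle_dec t a); [apply Hf | apply Hg]; lra.
Qed.

Lemma concat_Lip f g a b :
  is_metric X d -> 0 <= a -> 0 <= b -> Lip1 f a -> Lip1 g b -> f a = g 0 ->
  Lip1 (concat f g a) (a + b).
Proof.
  intros [_ [_ [_ Htri]]] Ha Hb Hf Hg E s t Hs Ht. unfold concat.
  destruct (Rle_dec s a); destruct (Rle_dec t a).
  - apply Hf; lra.
  - pose proof (Htri (f s) (f a) (g (t - a))).
    pose proof (Hf s a ltac:(lra) ltac:(lra)).
    rewrite E in *. pose proof (Hg 0 (t - a) ltac:(lra) ltac:(lra)). solve_abs.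
  - pose proof (Htri (g (s - a)) (f a) (f t)).
    pose proof (Hf a t ltac:(lra) ltac:(lra)).
    rewrite E in *. pose proof (Hg (s - a) 0 ltac:(lra) ltac:(lra)). solve_abs.
  - pose proof (Hg (s - a) (t - a) ltac:(lra) ltac:(lra)).
    replace (s - a - (t - a)) with (s - t) in * by ring. assumption.
Qed.

Lemma last_indep (l : list R) x d1 d2 : last (x :: l) d1 = last (x :: l) d2.
Proof.
  revert x. induction l as [|y l IH]; intros x; [reflexivity|].
  exact (IH y).
Qed.

Lemma last_cons (t0 t1 : R) ts : last (t1 :: ts) t0 = last ts t1.
Proof.
  destruct ts as [|x ts]; [reflexivity|].
  change (last (x :: ts) t0 = last (x :: ts) t1). apply last_indep.
Qed.

Lemma sorted_last t0 ts : sorted_le t0 ts -> t0 <= last ts t0.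
Proof.
  revert t0. induction ts as [|t1 ts IH]; intros t0 H; [simpl; lra|].
  destruct H as [H1 H2]. rewrite last_cons. specialize (IH t1 H2). lra.
Qed.

Lemma poly_sum_le_Lipschitz (gam : R -> X) (T : R) :
  0 <= T ->
  (forall s t, 0 <= s <= 1 -> 0 <= t <= 1 -> d (gam s) (gam t) <= T * Rabs (s - t)) ->
  forall ts t0, 0 <= t0 -> sorted_le t0 ts -> last ts t0 <= 1 ->
  poly_sum X d gam t0 ts <= T * (last ts t0 - t0).
Proof.
  intros HT HL ts. induction ts as [|t1 ts IH]; intros t0 H0 Hs Hl.
  - simpl. lra.
  - destruct Hs as [H1 H2]. rewrite last_cons in Hl |- *.
    pose proof (sorted_last t1 ts H2).
    specialize (IH t1 ltac:(lra) H2 Hl). simpl poly_sum.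
    pose proof (HL t0 t1 ltac:(lra) ltac:(lra)) as Hstep.
    rewrite Rabs_minus_sym, Rabs_pos_eq in Hstep by lra. nra.
Qed.

Lemma dS_le_Lipschitz_path (a : X) (r T : R) (p : R -> X) :
  is_metric X d -> 0 <= T -> Lip1 p T ->
  (forall tau, 0 <= tau <= T -> r <= d (p tau) a) ->
  Rbar_le (dS X d a r (p 0) (p T)) (Finite T).
Proof.
  intros Hm HT HL Hout.
  set (gam := fun t => p (T * t)).
  assert (HLg : forall s t, 0 <= s <= 1 -> 0 <= t <= 1 ->
                 d (gam s) (gam t) <= T * Rabs (s - t)).
  { intros s t Hs Ht. unfold gam.
    replace (T * Rabs (s - t)) with (Rabs (T * s - T * t))
      by (rewrite <- Rmult_minus_distr_l, Rabs_mult, (Rabs_pos_eq T HT); ring).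
    apply HL; nra. }
  apply Rbar_le_trans with (path_length X d gam).
  - apply Rbar_glb_le. exists gam. split; [|split; [|split; [|split]]].
    + intros t Ht eps Heps. exists (eps / (T + 1)). split.
      * apply Rdiv_lt_0_compat; lra.
      * intros s Hs Hst. pose proof (HLg s t Hs Ht).
        assert (T * Rabs (s - t) <= T * (eps / (T + 1))) by (apply Rmult_le_compat_l; lra).
        assert (T * (eps / (T + 1)) < eps).
        { unfold Rdiv. rewrite <- Rmult_assoc.
          apply Rmult_lt_reg_r with (T + 1); [lra|].
          rewrite Rmult_assoc, Rinv_l by lra. nra. }
        lra.
    + unfold gam. rewrite Rmult_0_r. reflexivity.
    + unfold gam. rewrite Rmult_1_r. reflexivity.
    + intros t Ht. unfold in_open_ball, gam. specialize (Hout (T * t) ltac:(nra)). lra.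
    + reflexivity.
  - apply Rbar_lub_le. intros x [ts [[Hs Hl] ->]]. simpl.
    pose proof (poly_sum_le_Lipschitz gam T HT HLg ts 0 ltac:(lra) Hs ltac:(lra)).
    rewrite Hl in H. lra.
Qed.

End LipschitzPaths.

Section Projections.
Variable X : Type.
Variable d : X -> X -> R.
Hypothesis Hm : is_metric X d.
Hypothesis Hgs : geodesic_space X d.

(* Detour lemma: leave S_a along [a,y1] up to x = g1(r1), cross a geodesic
   to w = g2(s) on [a,y2], and come back down to S_a.  If d(x,w) <= r1 - r,
   the crossing stays outside B_r(a), so the two points of S_a on these
   geodesics are d_{S_a}-close. *)
Lemma detour_dS a r y1 y2 g1 g2 r1 s :
  geodesic X d g1 a y1 -> geodesic X d g2 a y2 -> 0 <= r ->
  r <= r1 <= d a y1 -> r <= s <= d a y2 -> d (g1 r1) (g2 s) <= r1 - r ->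
  Rbar_le (dS X d a r (g1 r) (g2 r)) (Finite ((r1 - r) + d (g1 r1) (g2 s) + (s - r))).
Proof.
  intros Hg1 Hg2 Hr Hr1 Hs Hxw.
  pose proof Hm as [Hpos [_ [_ Htri]]].
  set (x := g1 r1) in *. set (w := g2 s) in *. set (e := d x w) in *.
  assert (He : 0 <= e) by apply Hpos.
  destruct (Hgs x w) as [gxw Hgxw].
  set (P1 := fun tau => g1 (r + tau)).
  set (P3 := fun tau => g2 (s - tau)).
  set (p := concat (concat P1 gxw (r1 - r)) P3 ((r1 - r) + e)).
  assert (J1 : P1 (r1 - r) = gxw 0).
  { destruct Hgxw as [E _]. rewrite E. unfold P1, x. f_equal. ring. }
  assert (J2 : concat P1 gxw (r1 - r) ((r1 - r) + e) = P3 0).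
  { rewrite concat_right by (assumption || lra).
    replace (r1 - r + e - (r1 - r)) with e by ring.
    destruct Hgxw as [_ [E _]]. unfold P3, e. rewrite E, Rminus_0_r. reflexivity. }
  assert (L1 : Lip1 d P1 (r1 - r)).
  { intros t1 t2 Ht1 Ht2. unfold P1. destruct Hg1 as [_ [_ Hiso]].
    rewrite Hiso by lra. right. f_equal. ring. }
  assert (L2 : Lip1 d gxw e).
  { intros t1 t2 Ht1 Ht2. destruct Hgxw as [_ [_ Hiso]].
    rewrite Hiso by (unfold e in *; lra). lra. }
  assert (L3 : Lip1 d P3 (s - r)).
  { intros t1 t2 Ht1 Ht2. unfold P3. destruct Hg2 as [_ [_ Hiso]].
    rewrite Hiso by lra. rewrite Rabs_minus_sym. right. f_equal. ring. }
  assert (Lp : Lip1 d p ((r1 - r) + e + (s - r))).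
  { apply concat_Lip; try assumption; try lra.
    apply concat_Lip; assumption || lra. }
  assert (Out : forall tau, 0 <= tau <= (r1 - r) + e + (s - r) -> r <= d (p tau) a).
  { apply (concat_all (fun z => r <= d z a) _ P3 ((r1 - r) + e) (s - r)).
    - apply (concat_all (fun z => r <= d z a) P1 gxw (r1 - r) e).
      + intros tau Htau. unfold P1.
        destruct (geodesic_dist_start X d Hm g1 a y1 (r + tau) Hg1 ltac:(lra)). lra.
      + intros tau Htau.
        destruct (geodesic_dist_start X d Hm gxw x w tau Hgxw ltac:(unfold e in Htau; lra)).
        destruct (geodesic_dist_start X d Hm g1 a y1 r1 Hg1 ltac:(lra)).
        pose proof (Htri x (gxw tau) a). unfold x in *. lra.
    - intros tau Htau. unfold P3.
      destruct (geodesic_dist_start X d Hm g2 a y2 (s - tau) Hg2 ltac:(lra)). lra. }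
  pose proof (dS_le_Lipschitz_path d a r ((r1 - r) + e + (s - r)) p Hm ltac:(lra) Lp Out)
    as Hp.
  replace (p 0) with (g1 r) in Hp.
  2:{ unfold p. rewrite !concat_left by lra. unfold P1. rewrite Rplus_0_r. reflexivity. }
  replace (p ((r1 - r) + e + (s - r))) with (g2 r) in Hp; [exact Hp|].
  unfold p. rewrite concat_right by (assumption || lra). unfold P3. f_equal. ring.
Qed.

Variable delta : R.
Hypothesis Hthin : thin_triangles X d delta.
Hypothesis Hdelta : 0 < delta.

Lemma proj_dS_le a r y1 y2 g12 u v :
  geodesic X d g12 y1 y2 ->
  (forall t, 0 <= t <= d y1 y2 -> r + 2 * delta < d (g12 t) a) ->
  r + delta <= d a y1 ->
  in_proj X d a r y1 u -> in_proj X d a r y2 v ->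
  Rbar_le (dS X d a r u v) (Finite (4 * delta)).
Proof.
  intros H12 Hfar Hy1 Hu Hv.
  pose proof Hm as [_ [_ [Hsym Htri]]].
  destruct (in_proj_point X d Hm a r y1 u Hu) as [g1 [Hg1 [<- Hr1]]].
  destruct (in_proj_point X d Hm a r y2 v Hv) as [g2 [Hg2 [<- _]]].
  set (x := g1 (r + delta)).
  destruct (geodesic_dist_start X d Hm g1 a y1 (r + delta) Hg1 ltac:(lra)) as [Hax Hxa].
  destruct (Hthin a y1 y2 g1 g12 _ Hg1 H12 (geodesic_rev X d Hm g2 a y2 Hg2))
    as [Hside _].
  destruct (Hside x) as [w [[[t [Ht Hw]]|[t [Ht Hw]]] Hxw]].
  { exists (r + delta). split; [lra|reflexivity]. }
  - (* w cannot lie on [y1,y2], which is too far from a *)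
    exfalso. specialize (Hfar t Ht). rewrite Hw in Hfar.
    pose proof (Htri w x a). rewrite (Hsym w x) in *. fold x in Hxa. lra.
  - (* w = g2(s) with r <= s <= r + 2δ: the detour has length <= 4δ *)
    rewrite (Hsym y2 a) in Ht. set (s := d a y2 - t) in Hw.
    destruct (geodesic_dist_start X d Hm g2 a y2 s Hg2 ltac:(unfold s; lra)) as [Haw Hwa].
    rewrite Hw in Haw, Hwa.
    assert (Hs_hi : s <= r + 2 * delta) by (pose proof (Htri a x w); fold x in Hax; lra).
    assert (Hs_lo : r <= s) by (pose proof (Htri x w a); fold x in Hxa; lra).
    rewrite <- Hw in Hxw.
    pose proof (detour_dS a r y1 y2 g1 g2 (r + delta) s Hg1 Hg2
                  ltac:(lra) ltac:(lra) ltac:(unfold s in *; lra) ltac:(fold x; lra)) as Hdet.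
    apply (Rbar_le_trans _ _ _ Hdet). simpl. fold x. lra.
Qed.

Lemma dproj_le_far a r b c gbc :
  geodesic X d gbc b c ->
  (forall t, 0 <= t <= d b c -> r + 2 * delta < d (gbc t) a) ->
  r + 2 * delta < d a b -> r + 2 * delta < d a c ->
  Rbar_le (dproj X d a r b c) (Finite (4 * delta)).
Proof.
  intros Hbc Hfar Hb Hc.
  pose proof Hm as [_ [_ [Hsym _]]].
  apply Rbar_lub_le. intros l [u [v [Hu [Hv ->]]]].
  (* a degenerate side [y,y] is far from a as soon as y is *)
  destruct Hu as [Hu|Hu]; destruct Hv as [Hv|Hv].
  - apply (proj_dS_le a r b b _ u v (geodesic_const X d Hm b)); try assumption; try lra.
    intros t _. rewrite Hsym. exact Hb.
  - apply (proj_dS_le a r b c gbc u v Hbc); assumption || lra.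
  - apply (proj_dS_le a r c b _ u v (geodesic_rev X d Hm gbc b c Hbc)); try assumption; try lra.
    intros t Ht. rewrite (Hsym c b) in Ht. apply Hfar. lra.
  - apply (proj_dS_le a r c c _ u v (geodesic_const X d Hm c)); try assumption; try lra.
    intros t _. rewrite Hsym. exact Hc.
Qed.

End Projections.

Section Finiteness.
Variable T : Type.

Lemma finite_subsingleton (P : T -> Prop) :
  (forall a a', P a -> P a' -> a = a') -> finite_set P.
Proof.
  intros H. destruct (classic (exists a, P a)) as [[a0 H0]|Hn].
  - exists (a0 :: nil). intros a Ha. left. apply H; assumption.
  - exists nil. intros a Ha. apply Hn. exists a. exact Ha.
Qed.

Lemma finite_union (P P1 P2 : T -> Prop) :
  finite_set P1 -> finite_set P2 -> (forall a, P a -> P1 a \/ P2 a) -> finite_set P.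
Proof.
  intros [l1 H1] [l2 H2] H. exists (l1 ++ l2). intros a Ha. apply in_or_app.
  destruct (H a Ha); [left; apply H1 | right; apply H2]; assumption.
Qed.

(* If each element of P carries a parameter in [0, D], and elements whose
   parameters are within e > 0 coincide, then P is finite: each interval
   ](n-1)e, ne] of parameters contributes at most one element. *)
Lemma finite_by_separated_parameter (P : T -> Prop) (Q : T -> R -> Prop) (D e : R) :
  0 < e -> (forall a, P a -> exists t, 0 <= t <= D /\ Q a t) ->
  (forall a a' t t', P a -> P a' -> 0 <= t <= D -> 0 <= t' <= D -> Q a t -> Q a' t' ->
     Rabs (t - t') <= e -> a = a') ->
  finite_set P.
Proof.
  intros He Hex Huniq.
  assert (Hn : forall n, finite_set
             (fun a => P a /\ exists t, 0 <= t <= D /\ t <= INR n * e /\ Q a t)).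
  { induction n as [|n IH].
    - apply finite_subsingleton.
      intros a a' [Pa [t [Ht [Ht0 Qt]]]] [Pa' [t' [Ht' [Ht0' Qt']]]].
      simpl in Ht0, Ht0'. apply (Huniq a a' t t'); try assumption. solve_abs.
    - apply (finite_union _ _
        (fun a => P a /\ exists t, 0 <= t <= D /\ INR n * e < t <= INR (S n) * e /\ Q a t) IH).
      + apply finite_subsingleton.
        intros a a' [Pa [t [Ht [Ht0 Qt]]]] [Pa' [t' [Ht' [Ht0' Qt']]]].
        rewrite S_INR in Ht0, Ht0'. apply (Huniq a a' t t'); try assumption. solve_abs.
      + intros a [Pa [t [Ht [Htn Qt]]]]. destruct (Rle_dec t (INR n * e)).
        * left. split; [assumption|]. exists t. auto.
        * right. split; [assumption|]. exists t. repeat split; assumption || lra. }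
  destruct (INR_unbounded (D / e)) as [n Hnn].
  assert (HD : D <= INR n * e).
  { apply Rlt_le, (Rmult_lt_reg_r (/ e)); [apply Rinv_0_lt_compat; lra|].
    rewrite Rmult_assoc, Rinv_r, Rmult_1_r by lra. exact Hnn. }
  destruct (Hn n) as [l Hl]. exists l. intros a Pa. apply Hl. split; [assumption|].
  destruct (Hex a Pa) as [t [Ht Qt]]. exists t. repeat split; assumption || lra.
Qed.

End Finiteness.

Theorem lemma3p6
  (X : Type) (d : X -> X -> R) (delta : R)
  (G : Type) (mul : G -> G -> G) (inv : G -> G) (one : G) (act : G -> X -> X)
  (C : X -> Prop) (Gs : X -> G -> Prop) (rho Rr theta : R)
  (Hmet : is_metric X d)
  (Hgeod : geodesic_space X d)
  (Hdelta : 0 < delta)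
  (Hhyp : thin_triangles X d delta)
  (Hgrp : is_group G mul inv one)
  (Hact : isometric_action X d G mul one act)
  (Hrot : fairly_rotating_family X d G mul inv one act C Gs rho)
  (Hrho : 20 * delta <= rho)
  (HR1 : 2 + 2 * delta <= Rr)
  (HR2 : Rr <= rho / 2 - 3 * delta)
  (Htheta : 4 * delta <= theta) :
  forall b c, C b -> C c ->
    finite_set (fun a => C a /\ a <> b /\ a <> c /\
                         Rbar_lt (Finite theta) (dproj X d a Rr b c)).
Proof.
  intros b c Cb Cc.
  destruct Hrot as [_ [_ [_ [_ [Hsep _]]]]].
  pose proof Hmet as [_ [_ [Hsym Htri]]].
  destruct (Hgeod b c) as [gbc Hbc].
  (* parametrise each relevant a by a point of [b,c] within Rr + 2δ of it;
     such a point exists, since otherwise d_a(b,c) <= 4δ <= θ *)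
  apply (finite_by_separated_parameter X _
           (fun a t => d (gbc t) a <= Rr + 2 * delta) (d b c) delta Hdelta).
  - intros a [Ca [Hab [Hac Hlt]]]. apply NNPP. intro Hn.
    assert (Hfar : forall t, 0 <= t <= d b c -> Rr + 2 * delta < d (gbc t) a).
    { intros t Ht. apply Rnot_le_lt. intro Hle. apply Hn. exists t. auto. }
    pose proof (Hsep a b Ca Cb Hab). pose proof (Hsep a c Ca Cc Hac).
    pose proof (dproj_le_far X d Hmet Hgeod delta Hhyp Hdelta a Rr b c gbc Hbc Hfar
                  ltac:(lra) ltac:(lra)) as Hle.
    destruct (dproj X d a Rr b c); simpl in *; lra.
  - (* two distinct points of C are rho > 2(Rr + 2δ) + δ apart *)
    intros a a' t t' [Ca _] [Ca' _] Ht Ht' Q Q' Habs.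
    destruct (classic (a = a')) as [E|Ne]; [exact E|exfalso].
    pose proof (Hsep a a' Ca Ca' Ne).
    destruct Hbc as [_ [_ Hiso]]. pose proof (Hiso t t' Ht Ht').
    pose proof (Htri a (gbc t) a'). pose proof (Htri (gbc t) (gbc t') a').
    rewrite (Hsym a (gbc t)) in *. lra.
Qed.
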